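(* Let $\theta\colon H\to G$ be a coherent continuous covering functor between Boolean groupoids. Suppose in addition that the image $\theta(H)$ is an invariant subset of $G$ and that $\theta$ is a homeomorphism from $H$ onto $\theta(H)$ (with the subspace topology). Then the map $\mathsf{KB}(G)\to\mathsf{KB}(H)$, $A\mapsto\theta^{-1}(A)$, is a surjective weakly meet preserving morphism of Boolean inverse semigroups.
   Context: A Boolean groupoid is an étale topological groupoid whose space of identities is a locally compact Hausdorff $0$-dimensional space. $\mathbf{d}(g)=g^{-1}g$, $\mathbf{r}(g)=gg^{-1}$. Define $g\,\mathcal{D}\,h$ iff there is $x$ with $\mathbf{d}(x)=\mathbf{d}(g)$ and $\mathbf{r}(x)=\mathbf{d}(h)$; a subset of $G$ is invariant if it is a union of $\mathcal{D}$-classes. A functor $\alpha\colon H\to G$ is a covering functor if for each identity $e$ of $H$ it restricts to a bijection $\{h:\mathbf{d}(h)=e\}\to\{g:\mathbf{d}(g)=\alpha(e)\}$; a continuous functor is coherent if inverse images of compact-open sets are compact-open. $\mathsf{KB}(G)$ denotes the Boolean inverse semigroup of compact-open partial bisections (subsets $A$ with $A^{-1}A,AA^{-1}\subseteq G_o$) under subset multiplication. A morphism of Boolean inverse semigroups preserves zero, products and joins of compatible pairs. A morphism $\phi\colon S\to T$ is weakly meet preserving if whenever $t\le\phi(a),\phi(b)$ there is $c\le a,b$ with $t\le\phi(c)$. *)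

From mathcomp Require Import all_boot.
From mathcomp Require Import classical_sets boolp functions topology.

Set Implicit Arguments.
Unset Strict Implicit.
Unset Printing Implicit Defensive.

Local Open Scope classical_set_scope.

(* Groupoids.  A groupoid on a carrier T is given by total functions   *)
(* dom (= d), cod (= r), inv and mul; the product  mul x y  is only    *)
(* meaningful ("defined") when  dom x = cod y.  The axioms force       *)
(* dom g = g^-1 g and cod g = g g^-1, as in the paper.                 *)
Record gpd_ops (T : Type) := GpdOps {
  gdom : T -> T;
  gcod : T -> T;
  ginv : T -> T;
  gmul : T -> T -> T }.

Definition is_groupoid (T : Type) (G : gpd_ops T) : Prop :=
  [/\ (forall x, gdom G (gdom G x) = gdom G x /\ gcod G (gdom G x) = gdom G x),
      (forall x, gdom G (gcod G x) = gcod G x /\ gcod G (gcod G x) = gcod G x),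
      (forall x y, gdom G x = gcod G y ->
          gdom G (gmul G x y) = gdom G y /\ gcod G (gmul G x y) = gcod G x),
      (forall x y z, gdom G x = gcod G y -> gdom G y = gcod G z ->
          gmul G (gmul G x y) z = gmul G x (gmul G y z)) &
      ((forall x, gmul G (gcod G x) x = x /\ gmul G x (gdom G x) = x) /\
       (forall x, [/\ gdom G (ginv G x) = gcod G x, gcod G (ginv G x) = gdom G x,
                     gmul G (ginv G x) x = gdom G x & gmul G x (ginv G x) = gcod G x]))].

Definition gidents (T : Type) (G : gpd_ops T) : set T := [set e | gdom G e = e].

Definition is_topological_groupoid (T : topologicalType) (G : gpd_ops T) : Prop :=
  [/\ is_groupoid G, continuous (ginv G) &
      {within [set p : T * T | gdom G p.1 = gcod G p.2],
        continuous (fun p : T * T => gmul G p.1 p.2)}].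

Definition local_homeomorphism (T S : topologicalType) (f : T -> S) : Prop :=
  forall x, exists U : set T,
    [/\ open U, U x,
        (forall y z, U y -> U z -> f y = f z -> y = z),
        {within U, continuous f} &
        (forall V : set T, open V -> V `<=` U -> open (f @` V))].

Definition is_etale (T : topologicalType) (G : gpd_ops T) : Prop :=
  is_topological_groupoid G /\ local_homeomorphism (gdom G).

Definition zero_dim (T : topologicalType) : Prop :=
  forall (x : T) (U : set T), open U -> U x ->
    exists V : set T, [/\ clopen V, V x & V `<=` U].

Definition is_boolean_groupoid (T : topologicalType) (G : gpd_ops T) : Prop :=
  [/\ is_etale G,
      locally_compact [set: subspace (gidents G)],
      hausdorff_space (subspace (gidents G)) &
      zero_dim (subspace (gidents G))].

Definition gD (T : Type) (G : gpd_ops T) (g h : T) : Prop :=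
  exists x, gdom G x = gdom G g /\ gcod G x = gdom G h.

Definition gpd_invariant (T : Type) (G : gpd_ops T) (S : set T) : Prop :=
  forall g h, gD G g h -> S g -> S h.

Definition is_functor (U T : Type) (H : gpd_ops U) (G : gpd_ops T) (f : U -> T) :=
  [/\ (forall x, f (gdom H x) = gdom G (f x)),
      (forall x, f (gcod H x) = gcod G (f x)) &
      (forall x y, gdom H x = gcod H y -> f (gmul H x y) = gmul G (f x) (f y))].

Definition is_covering_functor (U T : Type) (H : gpd_ops U) (G : gpd_ops T)
    (f : U -> T) : Prop :=
  is_functor H G f /\
  forall e, gidents H e ->
    (forall h1 h2, gdom H h1 = e -> gdom H h2 = e -> f h1 = f h2 -> h1 = h2) /\
    (forall g, gdom G g = f e -> exists h, gdom H h = e /\ f h = g).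

Definition compact_open (T : topologicalType) (A : set T) : Prop :=
  compact A /\ open A.

Definition coherent (U T : topologicalType) (f : U -> T) : Prop :=
  forall A : set T, compact_open A -> compact_open (f @^-1` A).

Definition homeo_onto_image (U T : topologicalType) (f : U -> T) : Prop :=
  [/\ injective f, continuous f &
      forall V : set U, open V -> exists W : set T, open W /\ f @` V = W `&` range f].

Definition setmul (T : Type) (G : gpd_ops T) (A B : set T) : set T :=
  [set z | exists x y, [/\ A x, B y, gdom G x = gcod G y & z = gmul G x y]].

Definition setinv (T : Type) (G : gpd_ops T) (A : set T) : set T := ginv G @` A.

Definition partial_bisection (T : Type) (G : gpd_ops T) (A : set T) : Prop :=
  setmul G (setinv G A) A `<=` gidents G /\ setmul G A (setinv G A) `<=` gidents G.

Definition inKB (T : topologicalType) (G : gpd_ops T) (A : set T) : Prop :=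
  [/\ compact A, open A & partial_bisection G A].

Definition KBle (T : Type) (G : gpd_ops T) (A B : set T) : Prop :=
  A = setmul G B (setmul G (setinv G A) A).

Definition KBidem (T : Type) (G : gpd_ops T) (A : set T) : Prop :=
  setmul G A A = A.

Definition KBcompatible (T : Type) (G : gpd_ops T) (A B : set T) : Prop :=
  KBidem G (setmul G (setinv G A) B) /\ KBidem G (setmul G A (setinv G B)).

(* phi : KB(G) -> KB(H) (given as a map on subsets) is a morphism of       *)
(* Boolean inverse semigroups: well defined, preserves zero, products and  *)
(* joins of compatible pairs (the join in KB is the union).               *)
Definition KB_morphism (T U : topologicalType) (G : gpd_ops T) (H : gpd_ops U)
    (phi : set T -> set U) : Prop :=
  [/\ (forall A, inKB G A -> inKB H (phi A)),
      phi set0 = set0,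
      (forall A B, inKB G A -> inKB G B ->
          phi (setmul G A B) = setmul H (phi A) (phi B)) &
      (forall A B, inKB G A -> inKB G B -> KBcompatible G A B ->
          phi (A `|` B) = phi A `|` phi B)].

Definition KB_surjective (T U : topologicalType) (G : gpd_ops T) (H : gpd_ops U)
    (phi : set T -> set U) : Prop :=
  forall B, inKB H B -> exists A, inKB G A /\ phi A = B.

Definition KB_weakly_meet_preserving (T U : topologicalType) (G : gpd_ops T)
    (H : gpd_ops U) (phi : set T -> set U) : Prop :=
  forall A B C, inKB G A -> inKB G B -> inKB H C ->
    KBle H C (phi A) -> KBle H C (phi B) ->
    exists D, [/\ inKB G D, KBle G D A, KBle G D B & KBle H C (phi D)].

(* Pulling back along the covering functor [theta] preserves products since
   stars lift uniquely, and preserves compact-open bisections since [theta] is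
   coherent and injective.  For surjectivity and weak meet preservation, a
   compact bisection [K] of [G] (the image of [B], resp. of [C]) has to be
   enlarged to a compact-open bisection [A] with [K `<=` A `<=` W] for an open
   [W] in which no point shares its domain or range with a point of [K]: for
   [theta @` B] this is where the invariance of [range theta] and the equality
   [theta @` B = W `&` range theta] are used, for [theta @` C `<=` A `&` B]
   it holds because [A] is a bisection.  Compact-open bisections form a basis,
   so [K] is covered by finitely many of them inside [W]; cutting out of each
   one the domain- and range-saturation of the previous ones, which is clopen
   because [gdom] and [gcod] are open continuous maps into the Hausdorff space
   of identities, leaves a bisection that still contains [K]. *)

From HB Require Import structures.
From mathcomp Require Import all_boot finmap.
From mathcomp Require Import classical_sets boolp functions topology.

Set Implicit Arguments.
Unset Strict Implicit.
Unset Printing Implicit Defensive.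

Local Open Scope classical_set_scope.

Section Refinement.
Variables (T : Type) (R : T -> T -> Prop) (P : set T -> Prop).

Definition rel_free (A : set T) := forall x y, A x -> A y -> R x y -> x = y.
Definition rel_sat (V : set T) := [set x | exists2 v, V v & R v x].

Hypotheses (R_sym : forall x y, R x y -> R y x) (P0 : P set0)
  (PU : forall A B, P A -> P B -> P (A `|` B))
  (PD : forall V A, P V -> P A -> P (A `\` rel_sat V)).

Local Notation union s := (\big[setU/set0]_(V <- s) V).

Lemma rel_free_refinement (s : seq (set T)) (K : set T) :
  (forall V, V \in s -> P V /\ rel_free V) -> K `<=` union s ->
  (forall k v, K k -> union s v -> R v k -> v = k) ->
  exists A, [/\ P A, rel_free A, K `<=` A & A `<=` union s].
Proof.
(* Keep [V] whole and cut its saturation out of a refinement of the tail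
   covering [K `\` V]. *)
elim: s K => [|V s IH] K sP; rewrite ?big_nil ?big_cons.
  by move=> K0 _; exists set0; split => // x y [].
move=> KVs Kfree; have [PV freeV] := sP V (mem_head _ _).
have [|x Kx|k v [Kk _] sv|A' [PA' freeA' KA' A's]] := IH (K `\` V).
- by move=> W Ws; apply: sP; rewrite in_cons Ws orbT.
- by case: Kx => /KVs [].
- by apply: Kfree => //; right.
exists (V `|` (A' `\` rel_sat V)); split.
- by apply: PU => //; apply: PD.
- move=> x y [Vx|[A'x nx]] [Vy|[A'y ny]] Rxy.
  + exact: freeV.
  + by case: ny; exists x.
  + by case: nx; exists y => //; apply: R_sym.
  + exact: freeA'.
- move=> k Kk; have [Vk|nVk] := pselect (V k); [by left|right; split].
    exact: KA'.
  by move=> [v Vv Rvk]; apply: nVk; rewrite -(Kfree k v) //; left.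
- by move=> x [Vx|[/A's sx _]]; [left|right].
Qed.

End Refinement.

Section Groupoid.
Variables (T : Type) (G : gpd_ops T).
Hypothesis hG : is_groupoid G.
Local Notation d := (gdom G).
Local Notation r := (gcod G).
Local Notation inv := (ginv G).
Local Notation mul := (gmul G).

Lemma gdom_dom x : d (d x) = d x.
Proof. by case: hG => h _ _ _ _; case: (h x). Qed.
Lemma gcod_dom x : r (d x) = d x.
Proof. by case: hG => h _ _ _ _; case: (h x). Qed.
Lemma gdom_cod x : d (r x) = r x.
Proof. by case: hG => _ h _ _ _; case: (h x). Qed.
Lemma gdom_mul x y : d x = r y -> d (mul x y) = d y.
Proof. by case: hG => _ _ h _ _ /h []. Qed.
Lemma gcod_mul x y : d x = r y -> r (mul x y) = r x.
Proof. by case: hG => _ _ h _ _ /h []. Qed.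
Lemma gmulA x y z : d x = r y -> d y = r z -> mul (mul x y) z = mul x (mul y z).
Proof. by case: hG => _ _ _ h _; apply: h. Qed.
Lemma gmul_cod x : mul (r x) x = x.
Proof. by case: hG => _ _ _ _ [h _]; case: (h x). Qed.
Lemma gmul_dom x : mul x (d x) = x.
Proof. by case: hG => _ _ _ _ [h _]; case: (h x). Qed.
Lemma gdom_inv x : d (inv x) = r x.
Proof. by case: hG => _ _ _ _ [_ h]; case: (h x). Qed.
Lemma gcod_inv x : r (inv x) = d x.
Proof. by case: hG => _ _ _ _ [_ h]; case: (h x). Qed.
Lemma gmulVx x : mul (inv x) x = d x.
Proof. by case: hG => _ _ _ _ [_ h]; case: (h x). Qed.
Lemma gmulxV x : mul x (inv x) = r x.
Proof. by case: hG => _ _ _ _ [_ h]; case: (h x). Qed.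

Lemma ginvK : involutive inv.
Proof.
move=> x; rewrite -[LHS]gmul_dom gdom_inv gcod_inv -gmulVx -gmulA.
- by rewrite gmulVx gdom_inv gmul_cod.
- by rewrite gdom_inv gcod_inv.
- by rewrite gdom_inv.
Qed.

Lemma gidents_dom x : gidents G (d x). Proof. exact: gdom_dom. Qed.
Lemma gidents_cod x : gidents G (r x). Proof. exact: gdom_cod. Qed.

Lemma gcod_ident e : gidents G e -> r e = e.
Proof. by move=> <-; rewrite gcod_dom. Qed.

Definition bisection (A : set T) :=
  {in A &, injective d} /\ {in A &, injective r}.

Lemma bisectionS A B : A `<=` B -> bisection B -> bisection A.
Proof.
by move=> AB [dB rB]; split=> x y; rewrite !inE => /AB Bx /AB By;
  [apply: dB|apply: rB]; rewrite inE.
Qed.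

Lemma partial_bisectionP A : partial_bisection G A <-> bisection A.
Proof.
split=> [[pbl pbr]|[dA rA]].
- split=> x y; rewrite !inE => Ax Ay.
  + move=> dxy; have : gidents G (mul x (inv y)).
      by apply: pbr; exists x, (inv y); split => //; [exists y|rewrite gcod_inv].
    rewrite /gidents /= gdom_mul ?gcod_inv // gdom_inv => /(congr1 (mul^~ y)).
    by rewrite gmulA ?gdom_inv ?gcod_inv // gmulVx -dxy gmul_dom gmul_cod.
  + move=> rxy; have e_id : gidents G (mul (inv x) y).
      by apply: pbl; exists (inv x), y; split => //; [exists x|rewrite gdom_inv].
    have e_dy : mul (inv x) y = d y by rewrite -[LHS]e_id gdom_mul ?gdom_inv.
    have dxy : d x = d y.
      by rewrite -gcod_inv -(gcod_mul (y := y)) ?gdom_inv // e_dy gcod_dom.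
    rewrite -[x]gmul_dom dxy -e_dy -gmulA ?gdom_inv ?gcod_inv //.
    by rewrite gmulxV rxy gmul_cod.
- split=> z.
  + move=> [_ [y [[x Ax <-] Ay dxy ->]]]; rewrite gdom_inv in dxy.
    by rewrite -(rA x y) ?inE // gmulVx; exact: gidents_dom.
  + move=> [x [_ [Ax [y Ay <-] dxy ->]]]; rewrite gcod_inv in dxy.
    by rewrite (dA x y) ?inE // gmulxV; exact: gidents_cod.
Qed.

Lemma KBle_subset C D : partial_bisection G C -> KBle G C D -> C `<=` D.
Proof.
move=> [pbC _] -> _ [x [e [Dx [_ [c [[c' Cc' <-] Cc dcc ->]]] dxe ->]]].
have -> : mul (inv c') c = d x.
  have ide : gidents G (mul (inv c') c).
    by apply: pbC; exists (inv c'), c; split => //; exists c'.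
  by rewrite dxe (gcod_ident ide).
by rewrite gmul_dom.
Qed.

Lemma subset_KBle C D : bisection C -> bisection D -> C `<=` D -> KBle G C D.
Proof.
move=> [_ rC] [dD _] CD; rewrite /KBle eqEsubset; split=> [c Cc|].
- exists c, (d c); split; [exact: CD| |by rewrite gcod_dom|by rewrite gmul_dom].
  by exists (inv c), c; split; [exists c|..|rewrite gmulVx]; rewrite ?gdom_inv.
- move=> _ [x [_ [Dx [_ [c [[c' Cc' <-] Cc dcc ->]]] dxe ->]]].
  rewrite gdom_inv in dcc; have cc : c' = c by apply: rC; rewrite ?inE.
  subst c'; rewrite gmulVx gcod_dom in dxe *.
  by rewrite (dD x c) ?inE ?gmul_dom //; apply: CD.
Qed.

Lemma KBleP C D : bisection C -> bisection D -> KBle G C D <-> C `<=` D.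
Proof.
move=> bC bD; split; last exact: subset_KBle.
by apply: KBle_subset; apply/partial_bisectionP.
Qed.

Definition share_end x y := d x = d y \/ r x = r y.

Lemma share_end_sym x y : share_end x y -> share_end y x.
Proof. by case=> e; [left|right]. Qed.

Lemma bisection_rel_free A : bisection A <-> rel_free share_end A.
Proof.
split=> [[dA rA] x y Ax Ay [e|e]|fA].
- by apply: dA; rewrite ?inE.
- by apply: rA; rewrite ?inE.
- by split=> x y; rewrite !inE => Ax Ay e; apply: fA => //; [left|right].
Qed.

Lemma share_end_gD x y : share_end x y -> gD G x y.
Proof.
case=> e; first by exists (d x); rewrite gdom_dom gcod_dom.
exists (mul (inv y) x); rewrite gdom_mul ?gcod_mul ?gcod_inv ?gdom_inv //.
Qed.

End Groupoid.

Section Functor.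
Variables (U T : Type) (H : gpd_ops U) (G : gpd_ops T) (theta : U -> T).
Hypothesis theta_functor : is_functor H G theta.

Lemma preimage_bisection A :
  injective theta -> bisection G A -> bisection H (theta @^-1` A).
Proof.
have [th_d th_r _] := theta_functor; move=> th_inj [dA rA].
split=> x y; rewrite !inE => Ax Ay e; apply: th_inj.
- by apply: dA; rewrite ?inE // -th_d -th_d e.
- by apply: rA; rewrite ?inE // -th_r -th_r e.
Qed.

Lemma image_bisection B :
  injective theta -> bisection H B -> bisection G (theta @` B).
Proof.
have [th_d th_r _] := theta_functor; move=> th_inj [dB rB].
split=> u v; rewrite !inE => -[x Bx <-] [y By <-] e; congr theta.
- by apply: dB; rewrite ?inE //; apply: th_inj; rewrite th_d th_d.
- by apply: rB; rewrite ?inE //; apply: th_inj; rewrite th_r th_r.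
Qed.

End Functor.

Lemma preimage_setmul (U T : Type) (H : gpd_ops U) (G : gpd_ops T)
    (theta : U -> T) A B :
  is_groupoid H -> is_groupoid G -> is_covering_functor H G theta ->
  theta @^-1` setmul G A B = setmul H (theta @^-1` A) (theta @^-1` B).
Proof.
move=> hH hG [[th_d th_r th_m] cov]; apply/seteqP; split=> z.
- move=> [a [b [Aa Bb dab e]]].
  have [|y [dy thy]] := (cov _ (gidents_dom hH z)).2 b.
    by rewrite th_d e gdom_mul.
  have [|x [dx thx]] := (cov _ (gidents_cod hH y)).2 a.
    by rewrite th_r thy.
  exists x, y; split; rewrite /preimage /= ?thx ?thy //.
  apply: (cov _ (gidents_dom hH z)).1; rewrite ?gdom_mul //.
  by rewrite e th_m // thx thy.
- move=> [x [y [Ax By dxy ->]]]; rewrite /preimage /= th_m //.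
  by exists (theta x), (theta y); split; rewrite // -th_d -th_r dxy.
Qed.

Lemma inKBP (T : topologicalType) (G : gpd_ops T) A : is_groupoid G ->
  inKB G A <-> [/\ compact A, open A & bisection G A].
Proof. by move=> hG; split=> -[cA oA /(partial_bisectionP hG)]. Qed.

Lemma compact_coverP (T : topologicalType) (K : set T) :
  compact K <-> cover_compact K.
Proof.
have [->|/set0P[x _]] := eqVneq K set0.
  split=> [_ I D f _ _|_]; last exact: compact0.
  by exists fset0 => //; rewrite set_fset0 bigcup_set0.
(* [compact_cover] is stated for pointed spaces; a point of [K] provides one. *)
pose Tp : ptopologicalType := HB.pack T (isPointed.Build T x).
by change (@compact Tp K <-> @cover_compact Tp K); rewrite compact_cover.
Qed.

Section LocalHomeomorphism.
Variables (T S : topologicalType) (f : T -> S).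
Hypothesis f_lh : local_homeomorphism f.

Lemma local_homeomorphism_continuous : continuous f.
Proof.
move=> x; have [U [oU Ux _ fU _]] := f_lh x.
by move: fU; rewrite continuous_open_subspace // => /(_ x); apply; rewrite inE.
Qed.

Lemma local_homeomorphism_open N : open N -> open (f @` N).
Proof.
move=> oN; rewrite openE => _ [x Nx <-]; have [U [oU Ux _ _ fUo]] := f_lh x.
have oNU : open (f @` (N `&` U)) by apply: fUo; [exact: openI|exact: subIsetr].
apply: filterS (open_nbhs_nbhs (conj oNU _)); last by exists x.
by move=> _ [y [Ny _] <-]; exists y.
Qed.

End LocalHomeomorphism.

Lemma compact_local_section (T S : topologicalType) (f : T -> S) (V : set T)
    (E : set S) :
  open V -> (forall x y, V x -> V y -> f x = f y -> x = y) ->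
  (forall N, open N -> open (f @` N)) ->
  compact E -> E `<=` f @` V -> compact (V `&` f @^-1` E).
Proof.
move=> oV f_inj f_open /compact_coverP cE EfV; apply/compact_coverP.
move=> I D F oF cover_VE.
have [|e Ee|D' D'D cover_E] := cE I D (fun i => f @` (F i `&` V)).
- by move=> i Di; apply: f_open; apply: openI => //; exact: oF.
- have [x Vx fxe] := EfV e Ee; rewrite -fxe in Ee.
  by have [i Di Fix] := cover_VE x (conj Vx Ee); exists i => //; exists x.
exists D' => // x [Vx Efx]; have [i D'i [y [Fiy Vy] fyx]] := cover_E _ Efx.
by exists i => //; rewrite -(f_inj y x).
Qed.

Lemma closed_preimage_image (T S : topologicalType) (Y : set S) (f : T -> S)
    (V : set T) :
  hausdorff_space (subspace Y) -> (forall x, Y (f x)) -> continuous f ->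
  compact V -> closed (f @^-1` (f @` V)).
Proof.
move=> Y_T2 fY f_cont cV.
have fVY : f @` V `&` Y = f @` V by apply/setIidPl => _ [x _ <-].
have /closed_subspaceP [C clC CY] : closed (f @` V : set (subspace Y)).
  apply: compact_closed => //.
  rewrite -fVY; apply/compact_subspaceIP; rewrite fVY.
  by apply: continuous_compact => //; exact: continuous_subspaceT.
suff -> : f @^-1` (f @` V) = f @^-1` C by exact: preimage_closed.
rewrite fVY in CY; apply/seteqP; split=> x.
- by rewrite /preimage -CY => -[].
- by rewrite /preimage -CY.
Qed.

Lemma boolean_groupoid_groupoid (T : topologicalType) (G : gpd_ops T) :
  is_boolean_groupoid G -> is_groupoid G.
Proof. by case=> [[[]]]. Qed.

Section BooleanGroupoid.
Variables (T : topologicalType) (G : gpd_ops T).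
Hypothesis hB : is_boolean_groupoid G.
Local Notation d := (gdom G).
Local Notation r := (gcod G).
Local Notation inv := (ginv G).
Local Notation Go := (gidents G).

Let hG : is_groupoid G := boolean_groupoid_groupoid hB.
Let ginv_continuous : continuous inv. Proof. by case: hB => [[[]]]. Qed.
Let gdom_lh : local_homeomorphism d. Proof. by case: hB => [[]]. Qed.

Let gcodE : r = d \o inv.
Proof. by apply: funext => x /=; rewrite gdom_inv. Qed.

Lemma gdom_continuous : continuous d.
Proof. exact: local_homeomorphism_continuous. Qed.

Lemma gdom_open N : open N -> open (d @` N).
Proof. exact: local_homeomorphism_open. Qed.

Lemma gcod_continuous : continuous r.
Proof.
rewrite gcodE => x.
by apply: continuous_comp; [exact: ginv_continuous|exact: gdom_continuous].
Qed.

Lemma gcod_open N : open N -> open (r @` N).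
Proof.
move=> oN; rewrite gcodE -image_comp; apply: gdom_open.
have -> : inv @` N = inv @^-1` N.
  apply/seteqP; split=> [_ [x Nx <-]|x Nx]; first by rewrite /preimage /= ginvK.
  by exists (inv x); rewrite ?ginvK.
by move: ginv_continuous => /continuousP; apply.
Qed.

Lemma gidents_open : open Go.
Proof.
have -> : Go = d @` setT.
  by apply/seteqP; split=> [e e_id|_ [x _ <-]]; [exists e|exact: gidents_dom].
exact/gdom_open/openT.
Qed.

Lemma open_bisection_nbhs g O : open O -> O g ->
  exists W, [/\ open W, W g, W `<=` O & bisection G W].
Proof.
move=> oO Og; have [U [oU Ug dU _ _]] := gdom_lh g.
have [U' [oU' U'g dU' _ _]] := gdom_lh (inv g).
exists (O `&` U `&` inv @^-1` U'); split.
- by apply: openI; [exact: openI|move: ginv_continuous => /continuousP; apply].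
- by [].
- by move=> x [[]].
- split=> x y; rewrite !inE => -[[_ Ux] U'x] [[_ Uy] U'y]; first exact: dU.
  by rewrite gcodE => /dU' => /(_ U'x U'y)/(can_inj (ginvK hG)).
Qed.

Lemma compact_open_gidents_nbhs e O : open O -> O e -> Go e ->
  exists E, [/\ compact E, open E, E e & E `<=` O `&` Go].
Proof.
move=> oO Oe Goe; have [_ lc _ zd] := hB.
have [K nK [cK clK]] := lc (e : subspace Go) I.
have nK' : nbhs (e : subspace Go) K by move: nK; rewrite withinET.
have oOK : open (O `&` Go `&` K° : set (subspace Go)).
  by apply: openI; [exact/open_subspaceW/openI/gidents_open|exact: open_interior].
have [E [[oE clE] Ee EOK]] := zd e _ oOK (conj (conj Oe Goe) nK').
have EGo : E `&` Go = E by apply/setIidPl => x /EOK [[]].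
exists E; split => //; last by move=> x /EOK [].
- have : compact (E : set (subspace Go)).
    by apply: subclosed_compact clE cK _ => x /EOK [_ /interior_subset].
  by rewrite -EGo => /compact_subspaceIP.
- by rewrite -EGo open_setIS //; exact: gidents_open.
Qed.

Lemma compact_open_bisection_nbhs g O : open O -> O g ->
  exists V, [/\ inKB G V, V g & V `<=` O].
Proof.
move=> oO Og; have [W [oW Wg WO bW]] := open_bisection_nbhs oO Og.
have dWg : (d @` W) (d g) by exists g.
have [E [cE oE Eg EWGo]] :=
  compact_open_gidents_nbhs (gdom_open oW) dWg (gidents_dom hG g).
exists (W `&` d @^-1` E); split => //; last by move=> x [/WO].
apply/(inKBP _ hG); split.
- apply: compact_local_section => //; last by move=> x /EWGo [].
  + by move=> x y Wx Wy; apply: bW.1; rewrite inE.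
  + exact: gdom_open.
- by apply: openI => //; move: gdom_continuous => /continuousP; apply.
- exact: bisectionS bW.
Qed.

Lemma share_end_satE V :
  rel_sat (share_end G) V = d @^-1` (d @` V) `|` r @^-1` (r @` V).
Proof.
apply/seteqP; split=> [x [v Vv [e|e]]|x [[v Vv e]|[v Vv e]]].
- by left; exists v.
- by right; exists v.
- by exists v => //; left.
- by exists v => //; right.
Qed.

Lemma compact_open_setD_sat A V : compact A -> open A -> compact V -> open V ->
  compact (A `\` rel_sat (share_end G) V) /\ open (A `\` rel_sat (share_end G) V).
Proof.
have [_ _ Go_T2 _] := hB; move=> cA oA cV oV; rewrite share_end_satE; split.
- apply: compact_closedI => //; rewrite closedC.
  by apply: openU; [move: gdom_continuous|move: gcod_continuous] => /continuousP;
    apply; [exact: gdom_open|exact: gcod_open].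
- apply: openI => //; rewrite openC.
  apply: closedU; apply: (closed_preimage_image Go_T2) => //.
  + exact: gidents_dom.
  + exact: gdom_continuous.
  + exact: gidents_cod.
  + exact: gcod_continuous.
Qed.

Lemma inKB_extension K W : compact K -> open W -> K `<=` W ->
  (forall k v, K k -> W v -> share_end G v k -> v = k) ->
  exists A, [/\ inKB G A, K `<=` A & A `<=` W].
Proof.
move=> cK oW KW K_free.
pose good := [set V | inKB G V /\ V `<=` W].
have [|k Kk|D D_good] := (compact_coverP K).1 cK _ good id.
- by move=> V [[_ oV _] _].
- have [V [VKB Vk VW]] := compact_open_bisection_nbhs oW (KW k Kk).
  by exists V.
rewrite /cover bigcup_fset => KD.
have {}D_good V : V \in D -> good V by move/D_good; rewrite inE.
have DW : \big[setU/set0]_(V <- D) V `<=` W.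
  by rewrite -bigcup_fset => x [V /D_good [_ VW] /VW].
have [||||A [[cA oA] fA KA AD]] :=
  rel_free_refinement (@share_end_sym _ G) (P := fun A => compact A /\ open A)
    (conj compact0 open0) _ _ _ KD.
- by move=> A B [cA oA] [cB oB]; split; [exact: compactU|exact: openU].
- by move=> V A [cV oV] [cA oA]; exact: compact_open_setD_sat.
- move=> V /D_good [/(inKBP _ hG) [cV oV bV] _].
  by split; [split|apply/bisection_rel_free].
- by move=> k v Kk /DW; exact: K_free.
exists A; split => //; last exact: subset_trans DW.
by apply/(inKBP _ hG); split => //; apply/bisection_rel_free.
Qed.

End BooleanGroupoid.

Section PreimageMorphism.
Variables (T U : topologicalType) (G : gpd_ops T) (H : gpd_ops U).
Variable theta : U -> T.
Hypotheses (hG : is_groupoid G) (hH : is_groupoid H).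
Local Notation phi := (fun A : set T => theta @^-1` A).

Lemma preimage_KB_morphism :
  is_covering_functor H G theta -> injective theta -> coherent theta ->
  KB_morphism G H phi.
Proof.
move=> cov th_inj coh; split=> [A||A B _ _|A B _ _ _].
- move=> /(inKBP _ hG) [cA oA bA]; have [cP oP] := coh A (conj cA oA).
  apply/(inKBP _ hH); split => //; apply: (preimage_bisection (proj1 cov)) => //.
- exact: preimage_set0.
- exact: preimage_setmul.
- exact: preimage_setU.
Qed.

Lemma preimage_KB_surjective :
  is_boolean_groupoid G -> is_functor H G theta ->
  gpd_invariant G (range theta) -> homeo_onto_image theta ->
  KB_surjective G H phi.
Proof.
move=> hBG th_fun th_inv [th_inj th_cont th_emb] B /(inKBP _ hH) [cB oB bB].
have [W [oW BW]] := th_emb B oB.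
have cthB : compact (theta @` B).
  by apply: continuous_compact => //; exact: continuous_subspaceT.
have bthB : bisection G (theta @` B) by apply: (image_bisection th_fun).
have [||A [AKB BA AW]] := inKB_extension hBG cthB oW.
- by rewrite BW => x [].
- move=> k v Bk Wv e; have Bv : (theta @` B) v.
    rewrite BW; split => //; apply: th_inv (share_end_gD hG (share_end_sym e)) _.
    by case: Bk => x _ <-; exists x.
  exact: (proj1 (bisection_rel_free _ _) bthB) v k Bv Bk e.
exists A; split => //; apply/seteqP; split=> [x Ax|x Bx].
- have : (theta @` B) (theta x) by rewrite BW; split; [exact: AW|exists x].
  by case=> y By /th_inj <-.
- by apply: BA; exists x.
Qed.

Lemma preimage_KB_weakly_meet_preserving :
  is_boolean_groupoid G -> is_functor H G theta -> injective theta ->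
  continuous theta -> KB_weakly_meet_preserving G H phi.
Proof.
move=> hBG th_fun th_inj th_cont A B C.
move=> /(inKBP _ hG) [cA oA bA] /(inKBP _ hG) [cB oB bB] /(inKBP _ hH) [cC oC bC].
have bP X : bisection G X -> bisection H (theta @^-1` X).
  exact: preimage_bisection.
rewrite /= (KBleP hH bC (bP _ bA)) (KBleP hH bC (bP _ bB)) => CA CB.
have cthC : compact (theta @` C).
  by apply: continuous_compact => //; exact: continuous_subspaceT.
have [||D [DKB CD DAB]] := inKB_extension hBG cthC (openI oA oB).
- by move=> _ [c Cc <-]; split; [exact: CA|exact: CB].
- move=> _ v [c Cc <-] [Av _] e.
  exact: (proj1 (bisection_rel_free _ _) bA) v (theta c) Av (CA c Cc) e.
have /(inKBP _ hG) [cD oD bD] := DKB.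
exists D; split => //.
- by apply/(KBleP hG bD bA) => x /DAB [].
- by apply/(KBleP hG bD bB) => x /DAB [].
- by apply/(KBleP hH bC (bP _ bD)) => c Cc; apply: CD; exists c.
Qed.

End PreimageMorphism.

Theorem lemma5p5 (T U : topologicalType) (G : gpd_ops T) (H : gpd_ops U)
    (theta : U -> T) :
  is_boolean_groupoid G -> is_boolean_groupoid H ->
  is_covering_functor H G theta -> continuous theta -> coherent theta ->
  gpd_invariant G (range theta) -> homeo_onto_image theta ->
  let phi := fun A : set T => theta @^-1` A in
  [/\ KB_morphism G H phi, KB_surjective G H phi & KB_weakly_meet_preserving G H phi].
Proof.
move=> hBG hBH cov th_cont coh th_inv th_homeo phi.
have hG := boolean_groupoid_groupoid hBG.
have hH := boolean_groupoid_groupoid hBH.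
have [th_inj _ _] := th_homeo.
split.
- exact: preimage_KB_morphism.
- exact: preimage_KB_surjective (proj1 cov) th_inv th_homeo.
- exact: preimage_KB_weakly_meet_preserving (proj1 cov) th_inj th_cont.
Qed.
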